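(* Consider the algorithm described in the context, and suppose it does not terminate finitely. Then: (i) for each $k\ge1$, if $J_k^Tc_k=0$ then $\tau_{k,\mathrm{trial}}=\infty$ and $\tau_k=\tau_{k-1}$; (ii) there exists a constant $\epsilon>0$ such that for every $k\ge1$ with $J_k^Tc_k\ne0$ and $\tau_k<\tau_{k-1}$ it holds that $\tau_{k-1}\ge\epsilon\|J_k^Tc_k\|_2$.
   Context: Problem: $\min_{x\in\mathbb{R}^n} f(x)+r(x)$ subject to $c(x)=0$, where $f:\mathbb{R}^n\to\mathbb{R}$ and $c:\mathbb{R}^n\to\mathbb{R}^m$ ($m\le n$) are continuously differentiable and $r:\mathbb{R}^n\to\mathbb{R}_{\ge 0}$ is convex. Write $g(x)=\nabla f(x)$, $J(x)=\nabla c(x)^T$, and $f_k=f(x_k)$, $g_k=g(x_k)$, $c_k=c(x_k)$, $J_k=J(x_k)$, $r_k=r(x_k)$. All norms are Euclidean. Merit function: $\Phi_\tau(x)=\tau(f(x)+r(x))+\|c(x)\|_2$. Algorithm: inputs $x_0$, $\alpha_0>0$, $\tau_{-1}>0$; constants $\kappa_v>0$, $\sigma_c,\epsilon_\tau,\xi,\eta\in(0,1)$, $\sigma_u\in(0,1/2]$, $\bar\sigma_u:=\sigma_u+\tfrac12$. For $k=0,1,\dots$: 1. If $J_k^Tc_k\ne0$, compute $v_k$ with $v_k\in\mathrm{Range}(J_k^T)$, $\|v_k\|_2\le\kappa_v\alpha_k\|J_k^Tc_k\|_2$, $\|c_k+J_kv_k\|_2\le\|c_k+J_kv_k^c\|_2$,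 where $v_k^c=-\beta_k^cJ_k^Tc_k$ with $\beta_k^c$ minimizing $\tfrac12\|c_k-\beta J_kJ_k^Tc_k\|_2^2$ over $0\le\beta\le\kappa_v\alpha_k$. Otherwise set $v_k=0$, and if $c_k\ne0$ terminate. 2. Let $u_k$ be the unique minimizer of $g_k^Tu+\tfrac1{2\alpha_k}\|u\|_2^2+r(x_k+v_k+u)$ subject to $J_ku=0$; set $s_k=v_k+u_k$. If $s_k=0$, terminate. 3. Let $D_k:=g_k^Ts_k+\bar\sigma_u\|s_k\|_2^2/\alpha_k+r(x_k+s_k)-r_k$; $\tau_{k,\mathrm{trial}}=\infty$ if $D_k\le0$, else $\tau_{k,\mathrm{trial}}=(1-\sigma_c)(\|c_k\|_2-\|c_k+J_kv_k\|_2)/D_k$. Set $\tau_k=\tau_{k-1}$ if $\tau_{k-1}\le\tau_{k,\mathrm{trial}}$, else $\tau_k=\min\{(1-\epsilon_\tau)\tau_{k-1},\tau_{k,\mathrm{trial}}\}$. 4. With $\Delta q_k(s,\tau):=-\tau(g_k^Ts+\tfrac1{2\alpha_k}\|s\|_2^2+r(x_k+s)-r_k)+\|c_k\|_2-\|c_k+J_ks\|_2$: if $\Phi_{\tau_k}(x_k+s_k)\le\Phi_{\tau_k}(x_k)-\eta\Delta q_k(s_k,\tau_k)$ set $x_{k+1}=x_k+s_k$, $\alpha_{k+1}=\alpha_k$; else $x_{k+1}=x_k$, $\alpha_{k+1}=\xi\alpha_k$. Standing assumption: there is an open convex set $\mathcal X$ containing all iterates $x_k$ and trial points $x_k+s_k$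 such that $f$ is bounded below on $\mathcal X$, $\nabla f$ is bounded and Lipschitz continuous on $\mathcal X$, $c$ is bounded on $\mathcal X$, $J$ is bounded and Lipschitz continuous on $\mathcal X$, and all subgradients of $r$ at points of $\mathcal X$ are uniformly bounded in norm. *)

From HB Require Import structures.
From mathcomp Require Import all_boot all_order all_algebra.
From mathcomp Require Import all_classical all_reals all_analysis.
Set Implicit Arguments. Unset Strict Implicit. Unset Printing Implicit Defensive.
Import Order.TTheory GRing.Theory Num.Theory.
Import numFieldNormedType.Exports.
Local Open Scope ring_scope.

Definition dotp (R : realType) (p : nat) (u w : 'cV[R]_p) : R :=
  \sum_(i < p) u i 0 * w i 0.

Definition enorm (R : realType) (p : nat) (u : 'cV[R]_p) : R :=
  Num.sqrt (dotp u u).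

Definition convex_fun (R : realType) (n : nat) (r : 'cV[R]_n -> R) : Prop :=
  forall x y (t : R), 0 <= t -> t <= 1 ->
    r (t *: x + (1 - t) *: y) <= t * r x + (1 - t) * r y.

Definition is_convex_set (R : realType) (n : nat) (X : set 'cV[R]_n) : Prop :=
  forall x y (t : R), X x -> X y -> 0 <= t -> t <= 1 -> X (t *: x + (1 - t) *: y).

Definition is_subgrad (R : realType) (n : nat) (r : 'cV[R]_n -> R) (x z : 'cV[R]_n) : Prop :=
  forall y, r x + dotp z (y - x) <= r y.

Definition merit (R : realType) (n m : nat) (f r : 'cV[R]_n -> R)
  (c : 'cV[R]_n -> 'cV[R]_m) (tau : R) (x : 'cV[R]_n) : R :=
  tau * (f x + r x) + enorm (c x).

Definition Dval (R : realType) (n : nat) (r : 'cV[R]_n -> R) (sigma_u alpha : R)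
  (x gx s : 'cV[R]_n) : R :=
  dotp gx s + (sigma_u + 2^-1) * enorm s ^+ 2 / alpha + r (x + s) - r x.

Definition tau_trial (R : realType) (n m : nat) (r : 'cV[R]_n -> R)
  (sigma_c sigma_u alpha : R) (x gx : 'cV[R]_n) (cx : 'cV[R]_m) (Jx : 'M[R]_(m, n))
  (v s : 'cV[R]_n) : \bar R :=
  let D := Dval r sigma_u alpha x gx s in
  if D <= 0 then +oo%E
  else (((1 - sigma_c) * (enorm cx - enorm (cx + Jx *m v)) / D)%:E)%E.

Definition dq (R : realType) (n m : nat) (r : 'cV[R]_n -> R) (alpha tau : R)
  (x gx : 'cV[R]_n) (cx : 'cV[R]_m) (Jx : 'M[R]_(m, n)) (s : 'cV[R]_n) : R :=
  - tau * (dotp gx s + enorm s ^+ 2 / (2 * alpha) + r (x + s) - r x)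
  + enorm cx - enorm (cx + Jx *m s).

(* tau_{k-1}, with tau_{-1} = taum1 *)
Definition tau_prev (R : realType) (taum1 : R) (tau : nat -> R) (k : nat) : R :=
  if k is k'.+1 then tau k' else taum1.

(* Both claims rest on the estimate D_k <= (G + K) |v_k| + |v_k|^2 / alpha_k, with G a bound on
   the gradients and K on the subgradients of r.  It comes from comparing u_k with the shrunk
   steps (1 - t) u_k, convexity of r on [x_k, x_k + s_k], and the Lipschitz bound that the
   (existing, bounded) subgradients give on r near x_k + s_k, letting t -> 0.
   If J_k^T c_k = 0 then v_k = 0, so D_k <= 0 and tau_trial = +oo.  Otherwise v_k does at least
   as well as the Cauchy step of length alpha_k m0, which reduces the linearized constraint
   violation by a multiple of alpha_k |J_k^T c_k|^2, while D_k = O(alpha_k |J_k^T c_k|); hence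
   tau_trial >= eps |J_k^T c_k|, and tau can only decrease when tau_{k-1} > tau_trial. *)

From HB Require Import structures.
From mathcomp Require Import all_boot all_order all_algebra.
From mathcomp Require Import all_classical all_reals all_analysis.
From mathcomp Require Import ring lra.
Set Implicit Arguments. Unset Strict Implicit. Unset Printing Implicit Defensive.
Import Order.TTheory GRing.Theory Num.Theory.
Import numFieldNormedType.Exports.
Local Open Scope ring_scope.

Section EuclideanSpace.
Variables (R : realType) (p : nat).
Implicit Types (a b d : 'cV[R]_p) (t : R).

Lemma dotpE a b : dotp a b = (a^T *m b) 0 0.
Proof. by rewrite /dotp !mxE; apply: eq_bigr => i _; rewrite mxE. Qed.

Lemma dotpC a b : dotp a b = dotp b a.
Proof. by apply: eq_bigr => i _; rewrite mulrC. Qed.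

Lemma dotpDr a b d : dotp a (b + d) = dotp a b + dotp a d.
Proof. by rewrite /dotp -big_split; apply: eq_bigr => i _; rewrite mxE mulrDr. Qed.

Lemma dotpZr t a b : dotp a (t *: b) = t * dotp a b.
Proof. by rewrite /dotp mulr_sumr; apply: eq_bigr => i _; rewrite mxE mulrCA. Qed.

Lemma dotpNr a b : dotp a (- b) = - dotp a b.
Proof. by rewrite -scaleN1r dotpZr mulN1r. Qed.

Lemma dotpBr a b d : dotp a (b - d) = dotp a b - dotp a d.
Proof. by rewrite dotpDr dotpNr. Qed.

Lemma dotp0r a : dotp a 0 = 0.
Proof. by rewrite -(scale0r 0) dotpZr mul0r. Qed.

Lemma dotpDl a b d : dotp (b + d) a = dotp b a + dotp d a.
Proof. by rewrite dotpC dotpDr !(dotpC a). Qed.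

Lemma dotpZl t a b : dotp (t *: b) a = t * dotp b a.
Proof. by rewrite dotpC dotpZr dotpC. Qed.

Lemma dotpNl a b : dotp (- b) a = - dotp b a.
Proof. by rewrite dotpC dotpNr dotpC. Qed.

Lemma dotpBl a b d : dotp (b - d) a = dotp b a - dotp d a.
Proof. by rewrite dotpDl dotpNl. Qed.

Lemma dotp0l a : dotp 0 a = 0.
Proof. by rewrite dotpC dotp0r. Qed.

Lemma dotpp_ge0 a : 0 <= dotp a a.
Proof. by apply: sumr_ge0 => i _; rewrite -expr2 sqr_ge0. Qed.

Lemma dotpp_eq0 a : (dotp a a == 0) = (a == 0).
Proof.
apply/idP/eqP => [|->]; last by rewrite dotp0r.
rewrite psumr_eq0 => [/allP a0|i _]; last by rewrite -expr2 sqr_ge0.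
apply/matrixP => i j; rewrite ord1 mxE.
by apply/eqP; rewrite -sqrf_eq0 expr2; exact: a0 (mem_index_enum i).
Qed.

Lemma dotp_delta a (i : 'I_p) : dotp a (delta_mx i 0) = a i 0.
Proof.
rewrite /dotp (bigD1 i) //= big1 ?addr0 => [|j /negbTE ji]; last first.
  by rewrite mxE ji mulr0.
by rewrite mxE !eqxx mulr1.
Qed.

Lemma enorm_ge0 a : 0 <= enorm a.
Proof. exact: sqrtr_ge0. Qed.

Lemma enorm_sqr a : enorm a ^+ 2 = dotp a a.
Proof. by rewrite sqr_sqrtr // dotpp_ge0. Qed.

Lemma enorm0 : enorm (0 : 'cV[R]_p) = 0.
Proof. by rewrite /enorm dotp0r sqrtr0. Qed.

Lemma enorm_gt0 a : a != 0 -> 0 < enorm a.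
Proof. by move=> a0; rewrite sqrtr_gt0 lt_neqAle dotpp_ge0 andbT eq_sym dotpp_eq0. Qed.

Lemma enormZ t a : enorm (t *: a) = `|t| * enorm a.
Proof. by rewrite /enorm dotpZl dotpZr mulrA -expr2 sqrtrM ?sqr_ge0 // sqrtr_sqr. Qed.

Lemma enormN a : enorm (- a) = enorm a.
Proof. by rewrite /enorm dotpNl dotpNr opprK. Qed.

Lemma enormD_sqr_orth a b :
  dotp a b = 0 -> enorm (a + b) ^+ 2 = enorm a ^+ 2 + enorm b ^+ 2.
Proof.
by move=> ab; rewrite !enorm_sqr dotpDl !dotpDr ab (dotpC b) ab addr0 add0r.
Qed.

Lemma dotp_sqr_le a b : dotp a b ^+ 2 <= dotp a a * dotp b b.
Proof.
have [->|b0] := eqVneq b 0; first by rewrite !dotp0r expr0n mulr0.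
have bb0 : 0 < dotp b b by rewrite -enorm_sqr exprn_gt0 ?enorm_gt0.
(* expanding gives [0 <= dotp b b * (dotp a a * dotp b b - dotp a b ^+ 2)] *)
have := dotpp_ge0 (dotp b b *: a - dotp a b *: b).
rewrite !(dotpBl, dotpBr, dotpZl, dotpZr) (dotpC b a); nra.
Qed.

Lemma dotp_le a b : dotp a b <= enorm a * enorm b.
Proof.
rewrite -sqrtrM ?dotpp_ge0 //; apply: le_trans (ler_norm _) _.
by rewrite -sqrtr_sqr ler_wsqrtr // dotp_sqr_le.
Qed.

End EuclideanSpace.

Lemma dotp_mulmx (R : realType) p q (A : 'M[R]_(p, q)) a b :
  dotp a (A *m b) = dotp (A^T *m a) b.
Proof. by rewrite !dotpE trmx_mul trmxK mulmxA. Qed.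

Lemma enorm_trmx_mulmx_le (R : realType) p q (A : 'M[R]_(p, q)) (K : R) c :
  0 <= K -> (forall h, enorm (A *m h) <= K * enorm h) ->
  enorm (A^T *m c) <= K * enorm c.
Proof.
move=> K0 AK; have [->|w0] := eqVneq (A^T *m c) 0.
  by rewrite enorm0 mulr_ge0 ?enorm_ge0.
rewrite -(ler_pM2l (enorm_gt0 w0)) -expr2 enorm_sqr -dotp_mulmx.
apply: le_trans (dotp_le _ _) _.
by rewrite mulrC mulrCA mulrA ler_wpM2r ?enorm_ge0.
Qed.

Definition vanishes_from (R : realType) p (i : nat) (h : 'cV[R]_p) : Prop :=
  forall j : 'I_p, (i <= j)%N -> h j 0 = 0.

Lemma vanishes_from_lin (R : realType) p i (a b : R) (w w' : 'cV[R]_p) :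
  vanishes_from i w -> vanishes_from i w' -> vanishes_from i (a *: w + b *: w').
Proof. by move=> w0 w'0 j ij; rewrite !mxE w0 // w'0 // !mulr0 addr0. Qed.

(* Finite-dimensional Hahn-Banach: a linear form dominated by [q] on the span of the first
   [i] coordinates extends to the next coordinate, with the new coefficient squeezed between
   a supremum of left slopes and an infimum of right slopes of [q]. *)
Section DominatedLinearForm.
Variables (R : realType) (p : nat) (q : 'cV[R]_p -> R).
Hypothesis q_convex : convex_fun q.

Lemma dominated_slopes_le (z w w' e : 'cV[R]_p) (s t : R) : 0 < s -> 0 < t ->
  dotp z ((t / (s + t)) *: w' + (s / (s + t)) *: w)
    <= q ((t / (s + t)) *: w' + (s / (s + t)) *: w) ->
  (dotp z w' - q (w' - s *: e)) / s <= (q (w + t *: e) - dotp z w) / t.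
Proof.
move=> s0 t0; have st0 : s + t != 0 by rewrite gt_eqF ?addr_gt0.
set l := t / (s + t); have l1E : 1 - l = s / (s + t) by rewrite /l; field.
have l0 : 0 <= l by rewrite divr_ge0 ?ltW ?addr_gt0.
have l1 : l <= 1 by rewrite ler_pdivrMr ?addr_gt0 // mul1r lerDr ltW.
have yE : l *: (w' - s *: e) + (1 - l) *: (w + t *: e) = l *: w' + (1 - l) *: w.
  by apply/matrixP => i j; rewrite !mxE l1E /l; field.
rewrite -l1E dotpDr !dotpZr => zy.
have := q_convex (w' - s *: e) (w + t *: e) l0 l1; rewrite yE => qy.
set A := dotp z w' in zy *; set B := dotp z w in zy *.
set Q1 := q (w' - s *: e) in qy *; set Q2 := q (w + t *: e) in qy *.
have : t * (A - Q1) + s * (B - Q2) <= 0.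
  have -> : t * (A - Q1) + s * (B - Q2) = (s + t) * (l * (A - Q1) + (1 - l) * (B - Q2)).
    by rewrite l1E /l; field.
  by rewrite pmulr_rle0 ?addr_gt0 //; lra.
rewrite ler_pdivrMr // mulrAC ler_pdivlMr //; lra.
Qed.

Lemma dominated_extend i (z : 'cV[R]_p) : (i < p)%N -> vanishes_from i z ->
  (forall h, vanishes_from i h -> dotp z h <= q h) ->
  exists2 z', vanishes_from i.+1 z' & forall h, vanishes_from i.+1 h -> dotp z' h <= q h.
Proof.
move=> ip zi zq; set io := Ordinal ip; pose e : 'cV[R]_p := delta_mx io 0.
have dotp_e a : dotp a e = a io 0 by rewrite dotp_delta.
have e_io : e io 0 = 1 by rewrite mxE !eqxx.
have e_vanish (j : 'I_p) : (i < j)%N -> e j 0 = 0.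
  by move=> ij; rewrite mxE andbT; case: eqP => // ji; move: ij; rewrite ji /= ltnn.
clearbody e.
pose L : set R := fun y => exists w s,
  [/\ vanishes_from i w, 0 < s & y = (dotp z w - q (w - s *: e)) / s].
have L_ub w t : vanishes_from i w -> 0 < t -> ubound L ((q (w + t *: e) - dotp z w) / t).
  move=> wi t0 _ [w' [s [w'i s0 ->]]].
  by apply: dominated_slopes_le => //; apply/zq/vanishes_from_lin.
have vanish0 : vanishes_from i (0 : 'cV[R]_p) by move=> j _; rewrite mxE.
have L0 : L ((dotp z 0 - q (0 - 1 *: e)) / 1) by exists 0, 1.
have L_sup : has_ubound L by exists ((q (0 + 1 *: e) - dotp z 0) / 1); apply: L_ub.
exists (z + sup L *: e) => [j ij|h hi].
  by rewrite !mxE zi ?(ltnW ij) // e_vanish // mulr0 addr0.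
pose t := h io 0; pose w := h - t *: e.
have wi : vanishes_from i w.
  move=> j; rewrite leq_eqVlt => /orP[/eqP ij|ij].
    by rewrite /w /t !mxE (_ : j = io) ?e_io ?mulr1 ?subrr //; apply: val_inj.
  by rewrite !mxE hi // e_vanish // mulr0 subr0.
have -> : h = w + t *: e by rewrite subrK.
clearbody w t.
have -> : dotp (z + sup L *: e) (w + t *: e) = dotp z w + sup L * t.
  rewrite dotpDl !dotpDr !dotpZr !dotpZl !dotp_e zi // (dotpC e) dotp_e wi // e_io.
  ring.
have [t0|t0|->] := ltrgtP t 0; last by rewrite mulr0 addr0 scale0r addr0 zq.
- have : L ((dotp z w - q (w - (- t) *: e)) / (- t)) by exists w, (- t); rewrite oppr_gt0.
  move=> /(ub_le_sup L_sup); rewrite scaleNr opprK ler_pdivrMr ?oppr_gt0 //; nra.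
- have := ge_sup (ex_intro _ _ L0) (L_ub w t wi t0); rewrite ler_pdivlMr //; lra.
Qed.

Lemma dominated_linear_exists : 0 <= q 0 -> exists z, forall h, dotp z h <= q h.
Proof.
move=> q0; suff /(_ p (leqnn p)) [z _ zq] : forall i, (i <= p)%N ->
    exists2 z, vanishes_from i z & forall h, vanishes_from i h -> dotp z h <= q h.
  by exists z => h; apply: zq => j; rewrite leqNgt ltn_ord.
elim=> [_|i IH ip].
  exists 0 => [j _|h h0]; first by rewrite mxE.
  have -> : h = 0 by apply/matrixP => j k; rewrite ord1 h0 // mxE.
  by rewrite dotp0r.
have [z zi zq] := IH (ltnW ip); exact: dominated_extend zi zq.
Qed.

End DominatedLinearForm.

Lemma convex_subgrad_exists (R : realType) p (r : 'cV[R]_p -> R) y :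
  convex_fun r -> exists z, is_subgrad r y z.
Proof.
move=> rc; have [a b t t0 t1|//|z zq] :=
  @dominated_linear_exists _ _ (fun h => r (y + h) - r y); last first.
- by exists z => w; have := zq (w - y); rewrite subrKC; lra.
- by rewrite addr0 subrr.
have -> : y + (t *: a + (1 - t) *: b) = t *: (y + a) + (1 - t) *: (y + b).
  by rewrite !scalerDr addrACA -scalerDl subrKC scale1r.
have := rc (y + a) (y + b) t t0 t1; lra.
Qed.

Lemma convex_lipschitz_lower (R : realType) p (r : 'cV[R]_p -> R) (X : set 'cV[R]_p)
    (K : R) y y' :
  convex_fun r -> (forall y z, X y -> is_subgrad r y z -> enorm z <= K) -> X y ->
  r y - K * enorm (y' - y) <= r y'.
Proof.
move=> rc rK Xy; have [z zy] := convex_subgrad_exists y rc.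
have := zy y'; have := dotp_le (- z) (y' - y); rewrite dotpNl enormN.
have := ler_wpM2r (enorm_ge0 (y' - y)) (rK _ _ Xy zy); lra.
Qed.

Lemma open_segment_small (R : realType) p (X : set 'cV[R]_p) (e d : 'cV[R]_p) :
  open X -> X e -> exists2 t0 : R, 0 < t0 & forall t, 0 < t -> t <= t0 -> X (e - t *: d).
Proof.
rewrite openE => /[apply] /nbhs_ballP [del /= del0 Xball].
have d1 : 0 < `|d| + 1 by rewrite ltr_wpDl.
exists (del / 2 / (`|d| + 1)) => [|t t0]; first by rewrite !divr_gt0.
rewrite ler_pdivlMr // => tdel; apply: Xball.
rewrite -ball_normE /= opprB addrC subrK normrZ gtr0_norm //; nra.
Qed.

Lemma ler_of_vanishing_slack (R : realFieldType) (D B C t0 : R) :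
  0 < t0 -> 0 <= C -> (forall t, 0 < t -> t <= t0 -> D <= B + t * C) -> D <= B.
Proof.
move=> t00 C0 DB; apply/ler_addgt0Pr => e e0.
have C1 : 0 < C + 1 by rewrite ltr_wpDl.
pose t := Num.min t0 (e / (C + 1)).
have t0' : 0 < t by rewrite lt_min t00 divr_gt0.
have te : t * (C + 1) <= e by rewrite -ler_pdivlMr // ge_min lexx orbT.
apply: le_trans (DB t t0' _) _; first by rewrite ge_min lexx.
by rewrite lerD2l; nra.
Qed.

Definition prox_obj (R : realType) p (r : 'cV[R]_p -> R) (g0 : 'cV[R]_p) (al : R)
    (y w : 'cV[R]_p) : R :=
  dotp g0 w + (2 * al)^-1 * enorm w ^+ 2 + r (y + w).

(* Comparing [u] with [(1 - t) u] stands in for the strong convexity of the subproblem. *)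
Lemma prox_min_shrink (R : realType) p q (r : 'cV[R]_p -> R) (g0 y u : 'cV[R]_p) (al t : R)
    (J0 : 'M[R]_(q, p)) :
  J0 *m u = 0 -> (forall w, J0 *m w = 0 -> prox_obj r g0 al y u <= prox_obj r g0 al y w) ->
  0 <= t -> t <= 1 ->
  t * dotp g0 u + (2 * t - t ^+ 2) * ((2 * al)^-1 * enorm u ^+ 2) + r (y + u)
  <= r (y + u - t *: u).
Proof.
move=> Ju umin t0 t1; have := @umin ((1 - t) *: u).
rewrite -scalemxAr Ju scaler0 => /(_ erefl).
rewrite /prox_obj dotpZr enormZ exprMn ger0_norm ?subr_ge0 // scalerBl scale1r addrA.
lra.
Qed.

Lemma Dval_le (R : realType) p q (r : 'cV[R]_p -> R) (X : set 'cV[R]_p) (K G al sigu : R)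
    (x g0 v u : 'cV[R]_p) (J0 : 'M[R]_(q, p)) :
  convex_fun r -> open X -> (forall y z, X y -> is_subgrad r y z -> enorm z <= K) ->
  X (x + (v + u)) -> enorm g0 <= G -> 0 < al -> sigu <= 2^-1 -> dotp v u = 0 ->
  J0 *m u = 0 ->
  (forall w, J0 *m w = 0 -> prox_obj r g0 al (x + v) u <= prox_obj r g0 al (x + v) w) ->
  Dval r sigu al x g0 (v + u) <= (G + K) * enorm v + enorm v ^+ 2 / al.
Proof.
move=> rc oX rK Xe g0G al0 su vu Ju umin.
set e := x + (v + u); set Q := (2 * al)^-1 * enorm u ^+ 2.
have Q0 : 0 <= Q by rewrite mulr_ge0 ?sqr_ge0 // invr_ge0 mulr_ge0 ?ltW.
have [t0 t00 Xt] := open_segment_small u oX Xe.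
have re_le t : 0 < t -> t <= Num.min t0 1 ->
    r e - r x <= - dotp g0 u - (2 - t) * Q + K * enorm v.
  rewrite le_min => t0' /andP[tt0 t1]; rewrite -(ler_pM2l t0').
  have := prox_min_shrink Ju umin (ltW t0') t1; rewrite -[x + v + u]addrA -/e -/Q => shrink.
  have := convex_lipschitz_lower (e - t *: (v + u)) rc rK (Xt t t0' tt0).
  have -> : e - t *: (v + u) - (e - t *: u) = - (t *: v).
    by apply/matrixP => i j; rewrite !mxE; ring.
  rewrite -/e enormN enormZ gtr0_norm // => lip.
  have := rc x e t (ltW t0') t1.
  have -> : t *: x + (1 - t) *: e = e - t *: (v + u).
    by apply/matrixP => i j; rewrite !mxE; ring.
  lra.
rewrite /Dval -/e enormD_sqr_orth // dotpDr.
apply: (@ler_of_vanishing_slack _ _ _ Q (Num.min t0 1)) => // [|t t0' tt0].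
  by rewrite lt_min t00 ltr01.
have DE : (sigu + 2^-1) * (enorm v ^+ 2 + enorm u ^+ 2) / al
    = (sigu + 2^-1) * (enorm v ^+ 2 / al) + (2 * sigu + 1) * Q.
  by rewrite /Q; field; rewrite gt_eqF.
have V0 : 0 <= enorm v ^+ 2 / al by rewrite divr_ge0 ?sqr_ge0 ?ltW.
have su1 : sigu + 2^-1 <= 1 by lra.
have su2 : 2 * sigu + 1 <= 2 by lra.
have := ler_piMl V0 su1; have := ler_wpM2r Q0 su2; have := re_le t t0' tt0; have := dotp_le g0 v; have := ler_wpM2r (enorm_ge0 v) g0G.
rewrite DE; lra.
Qed.

Definition beats_cauchy_step (R : realType) m n (c : 'cV[R]_m) (J0 : 'M[R]_(m, n))
    (bmax : R) (v : 'cV[R]_n) : Prop :=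
  exists betac : R,
    0 <= betac <= bmax /\
    (forall beta : R, 0 <= beta <= bmax ->
       2^-1 * enorm (c - betac *: (J0 *m J0^T *m c)) ^+ 2
       <= 2^-1 * enorm (c - beta *: (J0 *m J0^T *m c)) ^+ 2) /\
    enorm (c + J0 *m v) <= enorm (c + J0 *m (- betac *: (J0^T *m c))).

Section CauchyDecrease.
Variables (R : realType) (m n : nat) (c : 'cV[R]_m) (J0 : 'M[R]_(m, n)) (KJ : R).
Hypothesis J0_le : forall h, enorm (J0 *m h) <= KJ * enorm h.

Lemma cauchy_residual_sqr_le beta : 0 <= beta -> beta * KJ ^+ 2 <= 1 ->
  enorm (c - beta *: (J0 *m J0^T *m c)) ^+ 2
  <= enorm c ^+ 2 - beta * enorm (J0^T *m c) ^+ 2.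
Proof.
move=> b0 bKJ; set w := J0^T *m c; rewrite -mulmxA -/w.
have cJw : dotp c (J0 *m w) = enorm w ^+ 2 by rewrite dotp_mulmx enorm_sqr.
have -> : enorm (c - beta *: (J0 *m w)) ^+ 2
    = enorm c ^+ 2 - 2 * beta * enorm w ^+ 2 + beta ^+ 2 * enorm (J0 *m w) ^+ 2.
  rewrite [LHS]enorm_sqr !(dotpBl, dotpBr, dotpZl, dotpZr) (dotpC (J0 *m w)) !cJw.
  by rewrite !enorm_sqr; ring.
have Jw : enorm (J0 *m w) ^+ 2 <= KJ ^+ 2 * enorm w ^+ 2.
  rewrite -exprMn; apply: lerXn2r; rewrite ?nnegrE ?enorm_ge0 //.
  exact: le_trans (enorm_ge0 _) (J0_le w).
have := ler_wpM2l (sqr_ge0 beta) Jw.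
have := ler_wpM2r (mulr_ge0 b0 (sqr_ge0 (enorm w))) bKJ; nra.
Qed.

Variables (bmax : R) (v : 'cV[R]_n).
Hypothesis v_cauchy : beats_cauchy_step c J0 bmax v.

Lemma residual_sqr_le_cauchy beta : 0 <= beta <= bmax ->
  enorm (c + J0 *m v) ^+ 2 <= enorm (c - beta *: (J0 *m J0^T *m c)) ^+ 2.
Proof.
case: v_cauchy => bc [bcI [bc_min v_le]] bI.
rewrite -scalemxAr mulmxA scaleNr in v_le.
apply: le_trans (_ : _ <= enorm (c - bc *: (J0 *m J0^T *m c)) ^+ 2) _.
  by rewrite ler_sqr ?nnegrE ?enorm_ge0.
by have := bc_min beta bI; rewrite ler_pM2l ?invr_gt0 ?ltr0n.
Qed.

Lemma residual_le : enorm (c + J0 *m v) <= enorm c.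
Proof.
have [bc [/andP[bc0 bcb] _]] := v_cauchy.
have := @residual_sqr_le_cauchy 0; rewrite lexx (le_trans bc0 bcb) scale0r subr0.
by rewrite ler_sqr ?nnegrE ?enorm_ge0 //; apply.
Qed.

Lemma linearized_decrease (Kc beta : R) : 0 <= beta <= bmax -> beta * KJ ^+ 2 <= 1 ->
  enorm c <= Kc ->
  beta * enorm (J0^T *m c) ^+ 2 <= 2 * Kc * (enorm c - enorm (c + J0 *m v)).
Proof.
move=> /[dup] bI /andP[b0 _] bKJ cKc.
have := cauchy_residual_sqr_le b0 bKJ; have := residual_sqr_le_cauchy bI.
have := residual_le; have := enorm_ge0 (c + J0 *m v); nra.
Qed.

End CauchyDecrease.

Lemma tau_trial_ge (R : realType) n m (sigma_c kappa al0 KJ Kc GK : R) :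
  sigma_c < 1 -> 0 < kappa -> 0 < al0 -> 0 < KJ -> 0 < Kc -> 0 <= GK ->
  exists2 eps : R, 0 < eps &
  forall (r : 'cV[R]_n -> R) sigma_u al x0 g0 (c0 : 'cV[R]_m) (J0 : 'M[R]_(m, n)) v s,
    0 < al <= al0 ->
    (forall h, enorm (J0 *m h) <= KJ * enorm h) -> enorm c0 <= Kc ->
    enorm v <= kappa * al * enorm (J0^T *m c0) ->
    beats_cauchy_step c0 J0 (kappa * al) v ->
    Dval r sigma_u al x0 g0 s <= GK * enorm v + enorm v ^+ 2 / al ->
    ((eps * enorm (J0^T *m c0))%:E <= tau_trial r sigma_c sigma_u al x0 g0 c0 J0 v s)%E.
Proof.
move=> sc1 k0 al00 KJ0 Kc0 GK0.
(* [al * m0] is an admissible Cauchy step length with [al * m0 * KJ ^+ 2 <= 1]. *)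
pose m0 := Num.min kappa (al0 * KJ ^+ 2)^-1; pose C := GK * kappa + kappa ^+ 2 * KJ * Kc.
have m00 : 0 < m0 by rewrite lt_min k0 invr_gt0 mulr_gt0 ?exprn_gt0.
have C0 : 0 < C.
  exact: ltr_wpDl (mulr_ge0 GK0 (ltW k0)) (mulr_gt0 (mulr_gt0 (exprn_gt0 2 k0) KJ0) Kc0).
pose eps := (1 - sigma_c) * m0 / (2 * Kc * C).
have eps0 : 0 < eps by rewrite divr_gt0 ?mulr_gt0 ?subr_gt0.
exists eps => //.
move=> r su al x0 g0 c0 J0 v s /andP[al_gt0 alal0] J0_le c0_le v_le v_cauchy D_le.
rewrite /tau_trial; case: ifP => [_|/negbT]; first exact: leey.
rewrite -ltNge lee_fin => D0; set W := enorm (J0^T *m c0) in v_le *.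
set N := enorm c0 - enorm (c0 + J0 *m v).
have N0 : 0 <= N by rewrite subr_ge0 (residual_le v_cauchy).
have W0 : 0 <= W := enorm_ge0 _.
have WK : W <= KJ * Kc.
  exact: le_trans (enorm_trmx_mulmx_le c0 (ltW KJ0) J0_le) (ler_wpM2l (ltW KJ0) c0_le).
have dec : al * m0 * W ^+ 2 <= 2 * Kc * N.
  have m0K : m0 * (al0 * KJ ^+ 2) <= 1.
    by rewrite -ler_pdivlMr ?mulr_gt0 ?exprn_gt0 // div1r ge_min lexx orbT.
  apply: (linearized_decrease J0_le v_cauchy (beta := al * m0)) _ _ c0_le.
  - rewrite mulr_ge0 ?(ltW al_gt0) ?(ltW m00) //=.
    by rewrite mulrC ler_wpM2r ?(ltW al_gt0) // ge_min lexx.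
  - by have := ler_wpM2r (mulr_ge0 (ltW m00) (sqr_ge0 KJ)) alal0; nra.
have DC : Dval r su al x0 g0 s <= al * W * C.
  have v2 : enorm v ^+ 2 / al <= kappa ^+ 2 * al * W * W.
    rewrite ler_pdivrMr // (_ : _ * al = (kappa * al * W) ^+ 2); last by ring.
    by apply: lerXn2r; rewrite ?nnegrE ?enorm_ge0 ?(le_trans (enorm_ge0 _) v_le).
  have := ler_wpM2l GK0 v_le.
  have := ler_wpM2l (mulr_ge0 (mulr_ge0 (sqr_ge0 kappa) (ltW al_gt0)) W0) WK.
  rewrite /C; nra.
rewrite ler_pdivlMr //; apply: le_trans (ler_wpM2l (mulr_ge0 (ltW eps0) W0) DC) _.
have -> : eps * W * (al * W * C) = (1 - sigma_c) * (al * m0 * W ^+ 2) / (2 * Kc).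
  by rewrite /eps; field; rewrite !gt_eqF.
rewrite ler_pdivrMr ?mulr_gt0 //; have : 0 <= 1 - sigma_c by rewrite subr_ge0 ltW.
nra.
Qed.

Lemma backtracking_bounds (R : realDomainType) (a : nat -> R) (xi : R) :
  0 < a 0 -> 0 < xi -> xi <= 1 -> (forall k, a k.+1 = a k \/ a k.+1 = xi * a k) ->
  forall k, 0 < a k <= a 0.
Proof.
move=> a0 xi0 xi1 step; elim=> [|k /andP[ak0 ak]]; first by rewrite a0 lexx.
case: (step k) => ->; first by rewrite ak0 ak.
by rewrite mulr_gt0 //= (le_trans _ ak) // ler_piMl // ltW.
Qed.

Lemma merit_param_keep (R : realType) (prev cur : R) (trial : \bar R) (P : Prop) :
  (if (prev%:E <= trial)%E then cur = prev else P) -> trial = +oo%E -> cur = prev.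
Proof. by move=> upd trial_oo; move: upd; rewrite trial_oo leey. Qed.

Lemma merit_param_decrease (R : realType) (prev cur : R) (trial : \bar R) (P : Prop) :
  (if (prev%:E <= trial)%E then cur = prev else P) -> cur < prev -> (trial < prev%:E)%E.
Proof. by case: ifP => [_ ->|/negbT + _ _]; rewrite ?ltxx // -ltNge. Qed.

Unset Implicit Arguments.

Theorem lemma3p9 (R : realType) (n m : nat)
  (f : 'cV[R]_n -> R) (c : 'cV[R]_n -> 'cV[R]_m) (r : 'cV[R]_n -> R)
  (g : 'cV[R]_n -> 'cV[R]_n) (J : 'cV[R]_n -> 'M[R]_(m, n))
  (kappa_v sigma_c eps_tau xi eta sigma_u alpha0 taum1 : R)
  (x : nat -> 'cV[R]_n) (alpha : nat -> R) (tau : nat -> R)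
  (v u : nat -> 'cV[R]_n) :
  (m <= n)%N ->
  (* problem data: f, c continuously differentiable with gradient g, Jacobian J *)
  (forall y, differentiable f y /\ forall h, 'd f y h = dotp (g y) h) ->
  continuous g ->
  (forall y, differentiable c y /\ forall h, 'd c y h = J y *m h) ->
  continuous J ->
  (* r convex, nonnegative *)
  convex_fun r -> (forall y, 0 <= r y) ->
  (* constants *)
  0 < kappa_v -> 0 < sigma_c < 1 -> 0 < eps_tau < 1 -> 0 < xi < 1 -> 0 < eta < 1 ->
  0 < sigma_u <= 2^-1 -> 0 < alpha0 -> 0 < taum1 ->
  (* initialisation *)
  alpha 0%N = alpha0 ->
  (* step 1 *)
  (forall k, (J (x k))^T *m c (x k) != 0 ->
     (exists w : 'cV[R]_m, v k = (J (x k))^T *m w) /\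
     enorm (v k) <= kappa_v * alpha k * enorm ((J (x k))^T *m c (x k)) /\
     (exists betac : R,
        0 <= betac <= kappa_v * alpha k /\
        (forall beta : R, 0 <= beta <= kappa_v * alpha k ->
           2^-1 * enorm (c (x k) - betac *: (J (x k) *m (J (x k))^T *m c (x k))) ^+ 2
           <= 2^-1 * enorm (c (x k) - beta *: (J (x k) *m (J (x k))^T *m c (x k))) ^+ 2) /\
        enorm (c (x k) + J (x k) *m v k)
        <= enorm (c (x k) + J (x k) *m (- betac *: ((J (x k))^T *m c (x k)))))) ->
  (forall k, (J (x k))^T *m c (x k) = 0 -> v k = 0) ->
  (* step 2: u_k minimizes the subproblem over the null space of J_k *)
  (forall k, J (x k) *m u k = 0 /\
     forall w : 'cV[R]_n, J (x k) *m w = 0 ->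
       dotp (g (x k)) (u k) + (2 * alpha k)^-1 * enorm (u k) ^+ 2 + r (x k + v k + u k)
       <= dotp (g (x k)) w + (2 * alpha k)^-1 * enorm w ^+ 2 + r (x k + v k + w)) ->
  (* step 3: merit parameter update *)
  (forall k,
     let ttr := tau_trial r sigma_c sigma_u (alpha k) (x k) (g (x k)) (c (x k)) (J (x k))
                  (v k) (v k + u k) in
     if ((tau_prev taum1 tau k)%:E <= ttr)%E then tau k = tau_prev taum1 tau k
     else (tau k)%:E = Order.min ((1 - eps_tau) * tau_prev taum1 tau k)%:E ttr) ->
  (* step 4: acceptance test *)
  (forall k,
     let s := v k + u k in
     if merit f r c (tau k) (x k + s)
        <= merit f r c (tau k) (x k)
           - eta * dq r (alpha k) (tau k) (x k) (g (x k)) (c (x k)) (J (x k)) s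
     then x k.+1 = x k + s /\ alpha k.+1 = alpha k
     else x k.+1 = x k /\ alpha k.+1 = xi * alpha k) ->
  (* the algorithm does not terminate finitely *)
  (forall k, (J (x k))^T *m c (x k) = 0 -> c (x k) = 0) ->
  (forall k, v k + u k != 0) ->
  (* standing assumption *)
  (exists X : set 'cV[R]_n,
     open X /\ is_convex_set X /\
     (forall k, X (x k)) /\ (forall k, X (x k + (v k + u k))) /\
     (exists lb : R, forall y, X y -> lb <= f y) /\
     (exists K : R, forall y, X y -> enorm (g y) <= K) /\
     (exists L : R, forall y z, X y -> X z -> enorm (g y - g z) <= L * enorm (y - z)) /\
     (exists K : R, forall y, X y -> enorm (c y) <= K) /\
     (exists K : R, forall y h, X y -> enorm (J y *m h) <= K * enorm h) /\
     (exists L : R, forall y z h, X y -> X z ->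
        enorm ((J y - J z) *m h) <= L * enorm (y - z) * enorm h) /\
     (exists K : R, forall y z, X y -> is_subgrad r y z -> enorm z <= K)) ->
  (* conclusion *)
  (forall k, (1 <= k)%N -> (J (x k))^T *m c (x k) = 0 ->
     tau_trial r sigma_c sigma_u (alpha k) (x k) (g (x k)) (c (x k)) (J (x k))
       (v k) (v k + u k) = +oo%E /\ tau k = tau k.-1) /\
  (exists eps : R, 0 < eps /\
     forall k, (1 <= k)%N -> (J (x k))^T *m c (x k) != 0 -> tau k < tau k.-1 ->
       eps * enorm ((J (x k))^T *m c (x k)) <= tau k.-1).
Proof.
move=> _ _ _ _ _ r_convex _ kv0 /andP[_ sc1] _ /andP[xi0 xi1] _ /andP[_ su1] al00 _ al_init
  v_step v_zero u_step tau_step acc_step _ _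
  [X [X_open [_ [Xx [Xs [_ [[G gG] [_ [[Kc cKc] [[KJ JKJ] [_ [K subK]]]]]]]]]]]].
have al_bnd : forall k, 0 < alpha k <= alpha0.
  rewrite -al_init; apply: backtracking_bounds xi0 (ltW xi1) _ => [|k]; first by rewrite al_init.
  by move: (acc_step k) => /=; case: ifP => _ [_ ->]; [left | right].
have D_le k : Dval r sigma_u (alpha k) (x k) (g (x k)) (v k + u k)
    <= (G + K) * enorm (v k) + enorm (v k) ^+ 2 / alpha k.
  apply: Dval_le r_convex X_open subK (Xs k) (gG _ (Xx k)) _ su1 _ (u_step k).1 (u_step k).2.
    by case/andP: (al_bnd k).
  have [/v_zero ->|W0] := eqVneq ((J (x k))^T *m c (x k)) 0; first by rewrite dotp0l.
  by have [[w ->] _] := v_step k W0; rewrite -dotp_mulmx (u_step k).1 dotp0r.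
split=> [[|k] // _ W0|].
  have trial_oo : tau_trial r sigma_c sigma_u (alpha k.+1) (x k.+1) (g (x k.+1))
      (c (x k.+1)) (J (x k.+1)) (v k.+1) (v k.+1 + u k.+1) = +oo%E.
    rewrite /tau_trial (_ : Dval _ _ _ _ _ _ <= 0) //.
    by have := D_le k.+1; rewrite v_zero // enorm0 expr0n /= mul0r mulr0 addr0.
  by split=> //; exact: merit_param_keep (tau_step k.+1) trial_oo.
have [z0 z0_sub] := convex_subgrad_exists (x 0) r_convex.
have GK0 : 0 <= G + K := addr_ge0 (le_trans (enorm_ge0 _) (gG _ (Xx 0)))
  (le_trans (enorm_ge0 _) (subK _ _ (Xx 0) z0_sub)).
have [KJ1 KJ1_gt0 JKJ1] : exists2 K1, 0 < K1 & forall k h, enorm (J (x k) *m h) <= K1 * enorm h.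
  exists (Num.max KJ 1) => [|k h]; first by rewrite lt_max ltr01 orbT.
  by rewrite (le_trans (JKJ _ h (Xx k))) // ler_wpM2r ?enorm_ge0 ?le_max ?lexx.
have [Kc1 Kc1_gt0 cKc1] : exists2 K1, 0 < K1 & forall k, enorm (c (x k)) <= K1.
  by exists (Num.max Kc 1) => [|k]; rewrite ?lt_max ?ltr01 ?orbT // le_max cKc.
have [eps eps0 trial_ge] := tau_trial_ge n m sc1 kv0 al00 KJ1_gt0 Kc1_gt0 GK0.
exists eps; split=> // -[|k] // _ W0 /(merit_param_decrease (tau_step k.+1)) trial_lt.
have [_ [v_le v_cauchy]] := v_step k.+1 W0.
have := trial_ge r _ _ _ _ _ _ _ _ (al_bnd k.+1) (JKJ1 k.+1) (cKc1 k.+1) v_le v_cauchy (D_le k.+1).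
by move=> /le_lt_trans /(_ trial_lt); rewrite lte_fin => /ltW.
Qed.
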